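(* If $M$ is a uniformly dense loopless matroid containing a circuit, then $\operatorname{gir}(M)\ge\rho(M)/(\rho(M)-1)$.
   Context: For a matroid on $E$, $\operatorname{rank}(A)=\max_B|A\cap B|$ over bases, $\rho(A)=|A|/\operatorname{rank}(A)$, $\rho(M)=\rho(E)$; $M$ is uniformly dense if $\rho(A)\le\rho(E)$ for all nonempty $A\subseteq E$. A circuit is a subset $C\subseteq E$ with $\operatorname{rank}(C)=|C|-1$ and $\operatorname{rank}(S)=|S|$ for every proper subset $S\subset C$; $\operatorname{gir}(M)$ is the size of a smallest circuit. *)

From mathcomp Require Import all_boot all_order all_algebra.
Set Implicit Arguments. Unset Strict Implicit. Unset Printing Implicit Defensive.
Import Order.TTheory GRing.Theory Num.Theory.

Record matroid (T : finType) := Matroid {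
  bases : {set {set T}};
  bases_nonempty : bases != set0;
  bases_exchange : forall B1 B2, B1 \in bases -> B2 \in bases ->
    forall x, x \in B1 :\: B2 ->
      exists2 y, y \in B2 :\: B1 & (y |: (B1 :\ x)) \in bases
}.

Section MatroidDefs.
Variables (T : finType) (M : matroid T).

Definition rank (A : {set T}) : nat := \max_(B in bases M) #|A :&: B|.

Definition rho (A : {set T}) : rat := (#|A|%:R / (rank A)%:R)%R.

Definition rhoM : rat := rho [set: T].

Definition uniformly_dense : Prop :=
  forall A : {set T}, A != set0 -> (rho A <= rhoM)%R.

Definition circuit (C : {set T}) : bool :=
  (rank C + 1 == #|C|) &&
  [forall S : {set T}, (S \proper C) ==> (rank S == #|S|)].

Definition loopless : Prop := forall e : T, ~ circuit [set e].

(* girth: the size of a smallest circuit (default #|T|.+1 if none) *)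
Definition gir : nat :=
  \big[minn/#|T|.+1]_(C : {set T} | circuit C) #|C|.

End MatroidDefs.

(** A circuit C is dependent of rank #|C| - 1, so uniform density bounds
    #|C| / (#|C| - 1) by rho(M).  Looplessness gives #|C| >= 2, and since
    p |-> p / (p - 1) is a decreasing involution of (1, +oo), the bound flips
    to rho(M) / (rho(M) - 1) <= #|C|; apply it to a smallest circuit. *)

From mathcomp Require Import all_boot all_order all_algebra.
From mathcomp Require Import lra.
Import Order.TTheory GRing.Theory Num.Theory.

Local Open Scope ring_scope.

Lemma ler_conjugate_exponent (R : realFieldType) (p q : R) :
  1 < p -> p / (p - 1) <= q -> q / (q - 1) <= p.
Proof.
move=> p_gt1; have p1_gt0 : 0 < p - 1 by rewrite subr_gt0.
rewrite ler_pdivrMr // => pq.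
have q_gt1 : 1 < q by nra.
by rewrite ler_pdivrMr ?subr_gt0 //; nra.
Qed.

Section Circuits.
Variables (T : finType) (M : matroid T).

Lemma circuit_rank {C : {set T}} : circuit M C -> (rank M C).+1 = #|C|.
Proof. by case/andP => /eqP <- _; rewrite addn1. Qed.

Lemma loopless_circuit_rank_gt0 {C : {set T}} :
  loopless M -> circuit M C -> (0 < rank M C)%N.
Proof.
move=> noloop cC; rewrite lt0n; apply/negP => /eqP rC0.
have /eqP/cards1P [e defC] : #|C| = 1%N by rewrite -circuit_rank // rC0.
by apply: (noloop e); rewrite -defC.
Qed.

Lemma circuit_card_ge_density_conjugate (C : {set T}) :
  uniformly_dense M -> loopless M -> circuit M C ->
  rhoM M / (rhoM M - 1) <= #|C|%:R.
Proof.
move=> dense noloop cC.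
have rC_gt0 := loopless_circuit_rank_gt0 noloop cC.
have C_neq0 : C != set0 by rewrite -card_gt0 -circuit_rank.
apply: ler_conjugate_exponent; first by rewrite ltr1n -circuit_rank // ltnS.
have rankE : #|C|%:R - 1 = (rank M C)%:R :> rat.
  by rewrite -circuit_rank // -addn1 natrD addrK.
by rewrite rankE; exact: dense.
Qed.

Lemma gir_circuit :
  (exists C, circuit M C) -> exists2 C, circuit M C & gir M = #|C|.
Proof.
case=> C cC.
have [C0 cC0 girE] := eq_bigmin C (circuit M) (fun C => #|C|) cC
  (fun C _ => leqW (max_card C)).
by exists C0.
Qed.

End Circuits.

Theorem proposition3p9 (T : finType) (M : matroid T) :
  uniformly_dense M -> loopless M ->
  (exists C : {set T}, circuit M C) ->
  (rhoM M / (rhoM M - 1) <= (gir M)%:R)%R.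
Proof.
move=> dense noloop /gir_circuit [C cC ->].
exact: circuit_card_ge_density_conjugate.
Qed.
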